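(* Let $\mathcal C$ be a 3-cell template with SZS-pair $(h_0,h_1)$, $N=|\mathcal E|$, and write $\xi<_\iota\eta$ iff $h_\iota^{-1}(\xi)<h_\iota^{-1}(\eta)$. Then for each $\iota\in\{0,1\}$ the barycenter $\mathcal O$ lies strictly between the endpoints of each polar arc of $h_\iota$ in the order of $h_{1-\iota}$, i.e. $\mathbf N<_{1-\iota}\mathcal O<_{1-\iota}h_\iota(2)$ and $h_\iota(N-1)<_{1-\iota}\mathcal O<_{1-\iota}\mathbf S$.
   Context: 3-cell template: a finite regular cell complex $\mathcal C=\bigcup_{v\in\mathcal E}c_v$ (cells labelled by barycenters $v$) with (i) $\mathcal C=\mathrm{clos}\,c_{\mathcal O}=S^2\dot\cup c_{\mathcal O}$ for a single 3-cell; (ii) a bipolar orientation of the 1-skeleton (acyclic, unique vertex $\mathbf N$ without incoming, unique vertex $\mathbf S$ without outgoing edges) with two disjoint directed meridian paths $\mathbf{WE},\mathbf{EW}$ from $\mathbf N$ to $\mathbf S$ (as sets: their vertices and edges other than the poles), splitting $S^2$ into open hemispheres $\mathbf W,\mathbf E$; (iii) edges in $\mathbf W$ oriented towards, in $\mathbf E$ away from, their meridian endpoints other than $\mathbf N,\mathbf S$; (iv) the faces $\mathbf{NE}\subset\mathbf W$, $\mathbf{SW}\subset\mathbf E$ whose boundaries contain the first, last edge of $\mathbf{WE}$ share an edge of $\mathbf{WE}$, and the faces $\mathbf{NW}\subset\mathbf W$, $\mathbf{SE}\subset\mathbf E$ adjacent to the first, last edge of $\mathbf{EW}$ share an edge of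 $\mathbf{EW}$. Let $w^0_-,w^1_-,w^0_+,w^1_+$ be the barycenters of $\mathbf{NE},\mathbf{NW},\mathbf{SE},\mathbf{SW}$. ZS/SZ-pairs of a planar bipolar disk complex drawn with $\mathbf N$ on top: each face boundary splits into left and right directed paths from minimum to maximum; $h_0$ traverses each face barycenter from the right-path edge at the minimum to the left-path edge at the maximum, $h_1$ from the left-path edge at the minimum to the right-path edge at the maximum, and otherwise the Hamiltonian paths $h_\iota$ from $\mathbf N$ to $\mathbf S$ follow the bipolar orientation (ZS-pair); $(h_0,h_1)$ is SZ if $(h_1,h_0)$ is ZS. SZS-pair of $\mathcal C$: bijections $h_0,h_1:\{1,\dots,N\}\to\mathcal E$ such that (i) with both closed hemispheres drawn with $\mathbf N$ on top in the orientation induced by the sphere viewed from outside ($\mathbf{WE}$ = right boundary of $\mathrm{clos}\,\mathbf W$ and left boundary of $\mathrm{clos}\,\mathbf E$), the induced orders of $h_0,h_1$ on $\mathrm{clos}\,\mathbf W$ form its SZ-pair and on $\mathrm{clos}\,\mathbf E$ its ZS-pair; (ii) each $h_\iota$ traverses $w^\iota_-,\mathcal O,w^\iota_+$ consecutively. In particular $h_\iota(1)=\mathbf N$, $h_\iota(N)=\mathbf S$. *)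

From mathcomp Require Import all_boot.
Set Implicit Arguments.
Unset Strict Implicit.
Unset Printing Implicit Defensive.

(*  The boundary sphere S^2 = C minus c_O is given as a combinatorial map:    *)
(*  darts (half-edges) Dart, the edge involution alpha, and the rotation      *)
(*  sigma listing the darts around each vertex counterclockwise as seen from  *)
(*  OUTSIDE the ball.  Vertices / edges / faces are the finite types Vx / Eg /*)
(*  Fc, with vert d = vertex at which dart d starts, edg d = edge of d, and   *)
(*  fac d = the face lying to the RIGHT of d (viewed from outside), d being   *)
(*  read as directed from vert d to vert (alpha d).  The face to the left of  *)
(*  d is fac (alpha d).  fwd d says the bipolar orientation directs the edge  *)
(*  of d from vert d to vert (alpha d).  vN, vS are the poles; WE, EW are the *)
(*  two meridians, given as the lists of their (forward) darts from N to S.  *)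
Record tdata := TData {
  Dart : finType; Vx : finType; Eg : finType; Fc : finType;
  alpha : Dart -> Dart; sigma : Dart -> Dart;
  vert : Dart -> Vx; edg : Dart -> Eg; fac : Dart -> Fc;
  fwd : Dart -> bool;
  vN : Vx; vS : Vx;
  WE : seq Dart; EW : seq Dart }.

Section Template.
Variable T : tdata.
Local Notation D := (Dart T).
Local Notation alpha := (@alpha T).
Local Notation sigma := (@sigma T).
Local Notation vert := (@vert T).
Local Notation edg := (@edg T).
Local Notation fac := (@fac T).
Local Notation fwd := (@fwd T).

(* The cells of C, labelled by their barycenters: vertices, edges, faces of  *)
(* the boundary sphere, and the single 3-cell O.                              *)
Definition cell : finType := ((Vx T + Eg T) + (Fc T + unit))%type.
Definition CV (v : Vx T) : cell := inl (inl v).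
Definition CE (e : Eg T) : cell := inl (inr e).
Definition CF (f : Fc T) : cell := inr (inl f).
Definition CO : cell := inr (inr tt).

(* Face permutation: following it keeps the face on the right. *)
Definition phi (d : D) : D := sigma (alpha d).

Record regular_sphere : Prop := {
  sigma_inj : injective sigma;
  alphaK : forall d, alpha (alpha d) = d;
  alpha_fix : forall d, alpha d <> d;
  vert_surj : forall v, exists d, vert d = v;
  edg_surj : forall e, exists d, edg d = e;
  fac_surj : forall f, exists d, fac d = f;
  vert_orbit : forall d d', vert d = vert d' <-> fconnect sigma d d';
  edg_orbit : forall d d', edg d = edg d' <-> (d' = d \/ d' = alpha d);
  fac_orbit : forall d d', fac d = fac d' <-> fconnect phi d d';
  map_connected : forall d d',
      connect (fun x y => (y == alpha x) || (y == sigma x)) d d';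
  euler_sphere : #|Vx T| + #|Fc T| = #|Eg T| + 2;
  (* regularity: closed edges are arcs, closed faces are closed disks *)
  no_loop : forall d, vert (alpha d) <> vert d;
  face_simple : forall d d', fac d = fac d' -> vert d = vert d' -> d = d'
}.

Definition arc : rel (Vx T) :=
  fun u v => [exists d, [&& fwd d, vert d == u & vert (alpha d) == v]].

Record bipolar : Prop := {
  fwd_alpha : forall d, fwd (alpha d) = ~~ fwd d;
  acyclic : forall d, fwd d -> ~~ connect arc (vert (alpha d)) (vert d);
  source_N : forall v, (forall d, fwd d -> vert (alpha d) <> v) <-> v = vN T;
  sink_S : forall v, (forall d, fwd d -> vert d <> v) <-> v = vS T
}.

Definition dpath (p : seq D) (u v : Vx T) : Prop :=
  match p with
  | [::] => False
  | d :: p' => [/\ vert d = u, all fwd p,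
                  path (fun x y => vert (alpha x) == vert y) d p'
                & vert (alpha (last d p')) = v]
  end.

Definition merD (d : D) : bool := (d \in WE T) || (d \in EW T).
Definition merE (e : Eg T) : bool := [exists d, merD d && (edg d == e)].
Definition merV (v : Vx T) : bool :=
  [exists d, merD d && ((vert d == v) || (vert (alpha d) == v))].
Definition merV_int (v : Vx T) : bool := [&& merV v, v != vN T & v != vS T].

Definition fadj : rel (Fc T) :=
  fun f g => [exists d, [&& fac d == f, fac (alpha d) == g & ~~ merE (edg d)]].

(* Open hemispheres.  Viewed from outside with N on top, W lies to the west *)
(* of WE, i.e. to the right of the (downward) directed darts of WE, and E   *)
(* to their left.                                                           *)
Definition inWf (f : Fc T) : bool := [exists d, (d \in WE T) && connect fadj (fac d) f].
Definition inEf (f : Fc T) : bool :=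
  [exists d, (d \in WE T) && connect fadj (fac (alpha d)) f].
Definition inWe (e : Eg T) : bool :=
  ~~ merE e && [exists d, (edg d == e) && inWf (fac d)].
Definition inEe (e : Eg T) : bool :=
  ~~ merE e && [exists d, (edg d == e) && inEf (fac d)].
Definition inWv (v : Vx T) : bool :=
  ~~ merV v && [exists d, (vert d == v) && inWf (fac d)].
Definition inEv (v : Vx T) : bool :=
  ~~ merV v && [exists d, (vert d == v) && inEf (fac d)].

Definition closW (c : cell) : bool :=
  match c with
  | inl (inl v) => merV v || inWv v
  | inl (inr e) => merE e || inWe e
  | inr (inl f) => inWf f
  | inr (inr _) => false
  end.
Definition closE (c : cell) : bool :=
  match c with
  | inl (inl v) => merV v || inEv v
  | inl (inr e) => merE e || inEe e
  | inr (inl f) => inEf f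
  | inr (inr _) => false
  end.

Record template : Prop := {
  t_sphere : regular_sphere;
  t_bipolar : bipolar;
  t_WE : dpath (WE T) (vN T) (vS T);
  t_EW : dpath (EW T) (vN T) (vS T);
  t_disj_e : forall d d', d \in WE T -> d' \in EW T -> edg d <> edg d';
  t_disj_v : forall d d', d \in WE T -> d' \in EW T ->
               vert (alpha d) = vert (alpha d') -> vert (alpha d) = vS T;
  t_W_towards : forall d, fwd d -> inWe (edg d) -> ~~ merV_int (vert d);
  t_E_away : forall d, fwd d -> inEe (edg d) -> ~~ merV_int (vert (alpha d));
  (* (iv): NE (in W, at the first edge of WE) and SW (in E, at the last edge *)
  (* of WE) share an edge of WE; NW (in W, at the first edge of EW) and SE   *)
  (* (in E, at the last edge of EW) share an edge of EW.                     *)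
  t_NE_SW : forall d1 dk, ohead (WE T) = Some d1 -> ohead (rev (WE T)) = Some dk ->
      exists2 d, d \in WE T & fac d = fac d1 /\ fac (alpha d) = fac (alpha dk);
  t_NW_SE : forall e1 em, ohead (EW T) = Some e1 -> ohead (rev (EW T)) = Some em ->
      exists2 d, d \in EW T & fac (alpha d) = fac (alpha e1) /\ fac d = fac em
}.

(* For a face f: the right path consists of the directed edges having f on   *)
(* their right, the left path of those having f on their left (N on top,    *)
(* viewed from outside).  bottom f v: v is the extremal vertex of the face   *)
(* boundary at the S-side (no boundary edge of f leaves v); top f v: the     *)
(* extremal vertex at the N-side (no boundary edge of f enters v).           *)
Definition onbd (f : Fc T) (d : D) : bool := (fac d == f) || (fac (alpha d) == f).
Definition fbottom (f : Fc T) (v : Vx T) : Prop :=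
  forall d, fwd d -> onbd f d -> vert d <> v.
Definition ftop (f : Fc T) (v : Vx T) : Prop :=
  forall d, fwd d -> onbd f d -> vert (alpha d) <> v.

Definition right_bot (f : Fc T) (e : Eg T) : Prop :=
  exists d, [/\ fwd d, edg d = e, fac d = f & fbottom f (vert (alpha d))].
Definition left_bot (f : Fc T) (e : Eg T) : Prop :=
  exists d, [/\ fwd d, edg d = e, fac (alpha d) = f & fbottom f (vert (alpha d))].
Definition right_top (f : Fc T) (e : Eg T) : Prop :=
  exists d, [/\ fwd d, edg d = e, fac d = f & ftop f (vert d)].
Definition left_top (f : Fc T) (e : Eg T) : Prop :=
  exists d, [/\ fwd d, edg d = e, fac (alpha d) = f & ftop f (vert d)].

(* Admissible consecutive steps of a Hamiltonian path.  z = true: the "Z"  *)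
(* path h_0 of a ZS-pair (faces crossed from the right-path edge at the     *)
(* face's S-side extremum to the left-path edge at its N-side extremum);    *)
(* z = false: the "S" path h_1 (left to right).  Otherwise the path follows *)
(* the bipolar orientation: vertex -> outgoing edge -> its head vertex.     *)
Definition step (z : bool) (x y : cell) : Prop :=
  match x, y with
  | inl (inl v), inl (inr e) => exists d, [/\ fwd d, vert d = v & edg d = e]
  | inl (inr e), inl (inl v) => exists d, [/\ fwd d, edg d = e & vert (alpha d) = v]
  | inl (inr e), inr (inl f) => if z then right_bot f e else left_bot f e
  | inr (inl f), inl (inr e) => if z then left_top f e else right_top f e
  | _, _ => False
  end.

Definition ham_path (X : pred cell) (z : bool) (t : seq cell) : Prop :=
  [/\ uniq t, (forall c, (c \in t) = X c),
      ohead t = Some (CV (vN T)), ohead (rev t) = Some (CV (vS T)) &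
      forall i, i.+1 < size t -> step z (nth CO t i) (nth CO t i.+1)].

Definition ZS_pair (X : pred cell) (t0 t1 : seq cell) : Prop :=
  ham_path X true t0 /\ ham_path X false t1.
Definition SZ_pair (X : pred cell) (t0 t1 : seq cell) : Prop := ZS_pair X t1 t0.

(* A bijection h : {1..N} -> cells is encoded by its list of values           *)
(* [h(1); ...; h(N)] (a duplicate-free enumeration of all cells).            *)
Definition SZS_pair (h0 h1 : seq cell) : Prop :=
  [/\ uniq h0 /\ uniq h1, (forall c, c \in h0) /\ (forall c, c \in h1),
      SZ_pair closW [seq c <- h0 | closW c] [seq c <- h1 | closW c],
      ZS_pair closE [seq c <- h0 | closE c] [seq c <- h1 | closE c] &
      (* w^0_- = NE, w^1_- = NW, w^0_+ = SE, w^1_+ = SW *)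
      forall d1 dk e1 em,
        ohead (WE T) = Some d1 -> ohead (rev (WE T)) = Some dk ->
        ohead (EW T) = Some e1 -> ohead (rev (EW T)) = Some em ->
        infix [:: CF (fac d1); CO; CF (fac em)] h0 /\
        infix [:: CF (fac (alpha e1)); CO; CF (fac (alpha dk))] h1].

Definition before (h : seq cell) (x y : cell) : bool := index x h < index y h.

End Template.

(* In a closed hemisphere, [h_iota] restricts to a Hamiltonian path that can
   enter the edge of a forward dart only from its tail or from one prescribed
   adjacent face, and leave it only to its head or to the opposite face.  At
   [N], for the first edge of one meridian that face lies in the other open
   hemisphere, so both restrictions, hence [h_iota] itself, visit that edge
   second.  For the first edge of the other meridian the face is
   [w^(1-iota)_-], so [h_(1-iota)] visits it before that edge, and [O] comes
   right after it.  The same argument runs at [S].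
   That each face lies in exactly one open hemisphere is the Jordan curve
   theorem for the meridian cycle.  It is proved over F_2: connectivity and
   Euler's formula give H_1(S^2; F_2) = 0, so the meridian cycle bounds a
   2-chain, which is constant across non-meridian edges and changes across
   meridian ones. *)

From Pilot Require Import Defs.
From mathcomp Require Import all_boot all_algebra zify.
Set Implicit Arguments.
Unset Strict Implicit.
Unset Printing Implicit Defensive.

Import GRing.Theory.

Section SeqFacts.
Variable A : eqType.
Implicit Types (s : seq A) (X : pred A).

Lemma ohead_mem s x : ohead s = Some x -> x \in s.
Proof. by case: s => //= y s [<-]; rewrite mem_head. Qed.

Lemma index_lt_mem s x y : index x s < index y s -> x \in s.
Proof. by move/leq_trans/(_ (index_size y s)); rewrite index_mem. Qed.

Lemma nth_neq_in_inj (B : Type) (f : A -> B) s x0 :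
  (forall i j, i < j -> j < size s -> f (nth x0 s i) <> f (nth x0 s j)) ->
  {in s &, injective f}.
Proof.
move=> neq x y xs ys E; have [i_x i_y] := (nth_index x0 xs, nth_index x0 ys).
move: xs ys; rewrite -!index_mem => ltx lty.
case: (ltngtP (index x s) (index y s)) => [lt|lt|eq_i].
- by case: (neq _ _ lt lty); rewrite i_x i_y.
- by case: (neq _ _ lt ltx); rewrite i_x i_y E.
- by rewrite -i_x -i_y eq_i.
Qed.

Lemma index_filter_lt s X x y : uniq s -> x \in filter X s -> y \in filter X s ->
  index x (filter X s) < index y (filter X s) -> index x s < index y s.
Proof.
elim: s => //= a s IHs /andP [a_s uniq_s].
case Xa: (X a) => /=.
- rewrite !inE; case: (eqVneq a x) => [<-|ax] /=.
    by case: (eqVneq a y) => [<-|ay] //=; rewrite ltnn.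
  by case: (eqVneq a y) => [<-|ay] //= x_in y_in; rewrite ltnS; apply: IHs.
- have notin b : b \in filter X s -> a != b.
    by apply: contraTneq => <-; rewrite mem_filter Xa.
  move=> x_in y_in; rewrite (negbTE (notin _ x_in)) (negbTE (notin _ y_in)) ltnS.
  exact: IHs.
Qed.

Lemma index_infix3 s a b c : uniq s -> infix [:: a; b; c] s ->
  index b s = (index a s).+1 /\ index c s = (index b s).+1.
Proof.
move=> uniq_s /infixP [p [p' E]]; move: uniq_s; rewrite E cat_uniq.
case/and3P=> _ /hasPn p_abc /= /andP [/norP [ab /norP [ac _]] /andP [/norP [bc _] _]].
have [ap bp cp] : [/\ a \notin p, b \notin p & c \notin p].
  by split; apply: p_abc; rewrite !inE eqxx ?orbT.
rewrite !index_cat (negbTE ap) (negbTE bp) (negbTE cp) /= eqxx (negbTE ab) (negbTE ac).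
by rewrite (negbTE bc) !eqxx; split; lia.
Qed.

Lemma index_window s a o b x y : uniq s -> infix [:: a; o; b] s ->
  index a s < index x s -> x != o -> index y s < index b s -> y != o ->
  index o s < index x s /\ index y s < index o s.
Proof.
move=> uniq_s win ax xo yb yo; have [i_o i_b] := index_infix3 uniq_s win.
have o_in : o \in s by apply: (@index_lt_mem _ _ b); rewrite i_b.
have neq c : c != o -> index c s != index o s.
  apply: contraNneq => E; rewrite -(nth_index o o_in) -E nth_index //.
  by rewrite -index_mem E index_mem.
rewrite !ltn_neqAle neq // eq_sym neq //=.
by split; [rewrite i_o | rewrite -ltnS -i_b].
Qed.

Lemma nth_filter_head s X x0 : 0 < size s -> X (nth x0 s 0) ->
  nth x0 (filter X s) 0 = nth x0 s 0.
Proof. by case: s => //= a s _ ->. Qed.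

Lemma nth_filter_second s X x0 : 1 < size s -> X (nth x0 s 0) -> X (nth x0 s 1) ->
  nth x0 (filter X s) 1 = nth x0 s 1.
Proof. by case: s => [|a [|b s]] //= _ -> ->. Qed.

Lemma nth_filter_last s X x0 : 0 < size s -> X (nth x0 s (size s - 1)) ->
  nth x0 (filter X s) (size (filter X s) - 1) = nth x0 s (size s - 1).
Proof.
case/lastP: s => // s a _; rewrite size_rcons subn1 /= nth_rcons ltnn eqxx => Xa.
by rewrite filter_rcons Xa size_rcons subn1 /= nth_rcons ltnn eqxx.
Qed.

Lemma nth_filter_penult s X x0 : 1 < size s ->
  X (nth x0 s (size s - 1)) -> X (nth x0 s (size s - 2)) ->
  nth x0 (filter X s) (size (filter X s) - 2) = nth x0 s (size s - 2).
Proof.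
have nth_last2 (t : seq A) a b : nth x0 (rcons (rcons t a) b) (size (rcons (rcons t a) b) - 2) = a.
  by rewrite !size_rcons !subSS subn0 !nth_rcons size_rcons ltnSn ltnn eqxx.
have nth_last1 (t : seq A) a b : nth x0 (rcons (rcons t a) b) (size (rcons (rcons t a) b) - 1) = b.
  by rewrite !size_rcons subSS subn0 nth_rcons size_rcons ltnn eqxx.
case/lastP: s => // s b; case/lastP: s => // s a _.
by rewrite nth_last2 nth_last1 => Xb Xa; rewrite !filter_rcons Xa Xb nth_last2.
Qed.

End SeqFacts.

Section TemplateMap.
Variable T : tdata.
Hypothesis tmpl : template T.
Local Notation D := (Dart T).
Local Notation alpha := (@alpha T).
Local Notation sigma := (@sigma T).
Local Notation vert := (@vert T).
Local Notation edg := (@edg T).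
Local Notation fac := (@fac T).
Local Notation fwd := (@fwd T).
Local Notation fadj := (@fadj T).
Local Notation merE := (@merE T).
Local Notation merD := (@merD T).
Local Notation arc := (@Defs.arc T).
Local Notation inWf := (@inWf T).
Local Notation inEf := (@inEf T).
Local Notation closW := (@closW T).
Local Notation closE := (@closE T).

Let sph := t_sphere tmpl.
Let bip := t_bipolar tmpl.

Lemma alpha_involutive : involutive alpha. Proof. exact: alphaK sph. Qed.

Lemma fwd_alphaE d : fwd (alpha d) = ~~ fwd d. Proof. exact: (fwd_alpha bip). Qed.

Lemma vert_sigma d : vert (sigma d) = vert d.
Proof. by apply/esym/(vert_orbit sph); apply: fconnect1. Qed.

Lemma fac_sigma d : fac (sigma d) = fac (alpha d).
Proof.
apply/esym/(fac_orbit sph).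
have -> : sigma d = phi (alpha d) by rewrite /phi alpha_involutive.
exact: fconnect1.
Qed.

Lemma edg_alpha d : edg (alpha d) = edg d.
Proof. by apply/esym/(edg_orbit sph); right. Qed.

Lemma edg_eq_or_alpha d d' : edg d' = edg d -> d' = d \/ d' = alpha d.
Proof. by move=> E; apply/(edg_orbit sph); rewrite E. Qed.

Lemma fwd_edg_inj d d' : fwd d -> fwd d' -> edg d' = edg d -> d' = d.
Proof. by move=> fd fd' /edg_eq_or_alpha [//|E]; move: fd'; rewrite E fwd_alphaE fd. Qed.

Lemma no_arc_into_source d : fwd d -> vert (alpha d) <> vN T.
Proof. exact: (source_N bip (vN T)).2. Qed.

Lemma no_arc_out_of_sink d : fwd d -> vert d <> vS T.
Proof. exact: (sink_S bip (vS T)).2. Qed.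

Lemma merE_dart d : merE (edg d) -> merD d \/ merD (alpha d).
Proof.
by case/existsP=> m /andP [md /eqP /edg_eq_or_alpha [] E]; rewrite E in md; [left|right].
Qed.

Lemma merD_merE d : merD d -> merE (edg d).
Proof. by move=> md; apply/existsP; exists d; rewrite md eqxx. Qed.

Lemma fadj_sym : symmetric fadj.
Proof.
suff fadjC f g : fadj f g -> fadj g f by move=> f g; apply/idP/idP; apply: fadjC.
case/existsP=> d /and3P [/eqP fd /eqP fad nm]; apply/existsP; exists (alpha d).
by rewrite alpha_involutive fd fad edg_alpha nm !eqxx.
Qed.

Lemma connect_fadjC f g : connect fadj f g -> connect fadj g f.
Proof. by rewrite (sym_connect_sym fadj_sym). Qed.

Lemma connect_fadj_rotation x n :
  (forall i, 0 < i <= n -> ~~ merE (edg (iter i sigma x))) ->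
  connect fadj (fac (iter n.+1 sigma x)) (fac (alpha x)).
Proof.
elim: n => [|n IHn] nomer; first by rewrite /= fac_sigma connect0.
apply: connect_trans (IHn _); last first.
  by move=> i /andP [i0 lein]; apply: nomer; rewrite i0 (leq_trans lein).
apply: connect1; set y := iter n.+1 sigma x.
rewrite [iter _ _ _]/= -/y fac_sigma; apply/existsP; exists (alpha y).
by rewrite alpha_involutive edg_alpha !eqxx nomer //= ltnSn.
Qed.

Lemma connect_fadj_around x y : x != y -> vert x = vert y ->
  (forall z, vert z = vert x -> merE (edg z) -> z = x \/ z = y) ->
  connect fadj (fac y) (fac (alpha x)).
Proof.
move=> xy vxy only_xy; have cxy : fconnect sigma x y by apply/(vert_orbit sph).
have iterk := iter_findex cxy; have ltk := findex_max cxy.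
move: iterk ltk; case k_eq : (findex sigma x y) => [|k] iterk ltk.
  by move: xy; rewrite -iterk eqxx.
rewrite -iterk; apply: connect_fadj_rotation => i /andP [i0 leik].
have findex_i : findex sigma x (iter i sigma x) = i.
  by rewrite findex_iter // (ltn_trans _ ltk) // ltnS.
apply/negP => m; have vi : vert (iter i sigma x) = vert x.
  by elim: (i) => //= j IH; rewrite vert_sigma.
case: (only_xy _ vi m) => E; move: findex_i; rewrite E ?findex0 ?k_eq => fi.
  by move: i0; rewrite -fi.
by move: leik; rewrite -fi ltnn.
Qed.

Lemma dpathP p u v : dpath p u v -> exists d q, [/\ p = d :: q, vert d = u, all fwd p,
  path (fun a b => vert (alpha a) == vert b) d q & vert (alpha (last d q)) = v].
Proof. by case: p => // d q [? ? ? ?]; exists d, q. Qed.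

Section DirectedPath.
Variables (p : seq D) (u v : Vx T).
Hypothesis dp : dpath p u v.

Lemma dpath_fwd d : d \in p -> fwd d.
Proof. by case/dpathP: dp => x [q [-> _ /allP fp _ _]]; apply: fp. Qed.

Lemma dpath_step d0 i : i.+1 < size p ->
  vert (nth d0 p i.+1) = vert (alpha (nth d0 p i)).
Proof. by case/dpathP: dp => x [q [-> _ _ /(pathP d0) steps _]] /= /steps /eqP. Qed.

Lemma dpath_connect d0 i j : i < j -> j < size p ->
  connect arc (vert (alpha (nth d0 p i))) (vert (nth d0 p j)).
Proof.
elim: j => // j IHj; rewrite ltnS leq_eqVlt => /orP [/eqP <-|lt_ij] ltj.
  by rewrite (dpath_step d0 ltj) connect0.
apply: connect_trans (IHj lt_ij (ltnW ltj)) (connect1 _).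
apply/existsP; exists (nth d0 p j); rewrite (dpath_step d0 ltj) !eqxx !andbT.
by apply: dpath_fwd; rewrite mem_nth // ltnW.
Qed.

(* Either equality would close a directed cycle through the arcs from p_i to p_j. *)
Lemma dpath_lt_neq d0 i j : i < j -> j < size p ->
  vert (nth d0 p i) <> vert (nth d0 p j) /\
  vert (alpha (nth d0 p i)) <> vert (alpha (nth d0 p j)).
Proof.
move=> lt_ij ltj; have lti : i < size p by apply: ltn_trans ltj.
have cij := dpath_connect d0 lt_ij ltj.
have acy k : k < size p -> ~~ connect arc (vert (alpha (nth d0 p k))) (vert (nth d0 p k)).
  by move=> ltk; apply: (acyclic bip); apply: dpath_fwd; rewrite mem_nth.
by split=> E; [move: (acy _ lti); rewrite E | move: (acy _ ltj); rewrite -E]; rewrite cij.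
Qed.

Lemma dpath_vert_inj : {in p &, injective vert}.
Proof.
move=> d d' pd; apply: (nth_neq_in_inj (x0 := d)) => // i j lt_ij ltj.
exact: (dpath_lt_neq d lt_ij ltj).1.
Qed.

Lemma dpath_head_inj : {in p &, injective (vert \o alpha)}.
Proof.
move=> d d' pd; apply: (nth_neq_in_inj (x0 := d)) => // i j lt_ij ltj.
exact: (dpath_lt_neq d lt_ij ltj).2.
Qed.

Lemma dpath_pred d : d \in p -> vert d <> u ->
  exists2 d', d' \in p & vert (alpha d') = vert d.
Proof.
move=> pd neq_u; have := nth_index d pd; have := pd; rewrite -index_mem.
case: (index d p) => [|j] ltd i_d.
  by case/dpathP: dp => x [q [Ep vx _ _ _]]; move: i_d; rewrite Ep /= => xd; rewrite -xd in neq_u.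
by exists (nth d p j); rewrite ?mem_nth ?(ltnW ltd) // -(dpath_step d ltd) i_d.
Qed.

Lemma dpath_first d : d \in p -> vert d = u -> ohead p = Some d.
Proof.
move=> pd vd; case/dpathP: (dp) => x [q [Ep vx _ _ _]].
by rewrite Ep (@dpath_vert_inj x d) ?Ep ?mem_head -?Ep ?vx.
Qed.

Lemma dpath_last d : d \in p -> vert (alpha d) = v -> ohead (rev p) = Some d.
Proof.
move=> pd vd; case/dpathP: (dp) => x [q [Ep _ _ _ vl]].
rewrite Ep lastI rev_rcons (@dpath_head_inj (last x q) d) //= ?vl //.
by rewrite Ep mem_last.
Qed.

Lemma dpath_uniq : uniq p.
Proof.
case/dpathP: dp => x _; have [//|/(uniqPn x) [i [j [lt_ij ltj E]]]] := boolP (uniq p).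
by case: (dpath_lt_neq x lt_ij ltj); rewrite E.
Qed.

Lemma dpath_ind (R : D -> D -> Prop) d0 : (forall x, R x x) ->
  (forall x y z, R x y -> R y z -> R x z) ->
  (forall x x', x \in p -> x' \in p -> vert x' = vert (alpha x) -> R x x') ->
  forall d, d \in p -> R (nth d0 p 0) d.
Proof.
move=> Rrefl Rtrans Rstep d pd; rewrite -(nth_index d0 pd).
have := pd; rewrite -index_mem; elim: (index d p) => // j IHj ltj.
apply: Rtrans (IHj (ltnW ltj)) _; apply: Rstep; rewrite ?mem_nth ?(ltnW ltj) //.
exact: dpath_step.
Qed.

End DirectedPath.

Lemma dpath_ohead_vert p u v d : dpath p u v -> ohead p = Some d -> vert d = u.
Proof. by case/dpathP=> x [q [-> vx _ _ _]] [<-]. Qed.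

Lemma dpath_olast_vert p u v d : dpath p u v -> ohead (rev p) = Some d -> vert (alpha d) = v.
Proof. by case/dpathP=> x [q [-> _ _ _ vl]]; rewrite lastI rev_rcons => -[<-]. Qed.

Definition sides_linked (x y : D) :=
  connect fadj (fac x) (fac y) /\ connect fadj (fac (alpha x)) (fac (alpha y)).

Lemma sides_linked_refl x : sides_linked x x.
Proof. by split; apply: connect0. Qed.

Lemma sides_linked_trans x y z : sides_linked x y -> sides_linked y z -> sides_linked x z.
Proof. by move=> [xy1 xy2] [yz1 yz2]; split; apply: connect_trans; eassumption. Qed.

Section MeridianPair.
Variables P Q : seq D.
Hypotheses (dpP : dpath P (vN T) (vS T)) (dpQ : dpath Q (vN T) (vS T)).
Hypothesis PQ_meet_at_S : forall d d', d \in P -> d' \in Q ->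
  vert (alpha d) = vert (alpha d') -> vert (alpha d) = vS T.
Hypothesis merD_PQ : forall d, merD d = (d \in P) || (d \in Q).

Lemma meridian_darts_at x x' z : x \in P -> x' \in P -> vert x' = vert (alpha x) ->
  vert z = vert x' -> merE (edg z) -> z = x' \/ z = alpha x.
Proof.
move=> Px Px' vx' vz; have not_S : vert x' <> vS T by apply: no_arc_out_of_sink (dpath_fwd dpP Px').
case/merE_dart; rewrite !merD_PQ => /orP [] in_z.
- by left; apply: (dpath_vert_inj dpP).
- have [z' Qz' vz'] : exists2 z', z' \in Q & vert (alpha z') = vert z.
    by apply: (dpath_pred dpQ) => //; rewrite vz vx'; apply: no_arc_into_source (dpath_fwd dpP Px).
  by case: not_S; rewrite vx' (PQ_meet_at_S Px Qz') // vz' vz.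
- by right; rewrite -(dpath_head_inj dpP in_z Px) /= ?alpha_involutive // vz.
- by case: not_S; rewrite vx' (PQ_meet_at_S Px in_z) // alpha_involutive vz.
Qed.

Lemma sides_linked_step x x' : x \in P -> x' \in P -> vert x' = vert (alpha x) ->
  sides_linked x x'.
Proof.
move=> Px Px' vx'; have ax_x' : alpha x != x'.
  by apply/eqP => E; move: (dpath_fwd dpP Px'); rewrite -E fwd_alphaE (dpath_fwd dpP Px).
split.
  apply: connect_fadjC; have := @connect_fadj_around (alpha x) x'.
  rewrite alpha_involutive; apply=> // z vz /(meridian_darts_at Px Px' vx') [].
  - by rewrite vz.
  - by right.
  - by left.
apply: connect_fadj_around; rewrite 1?eq_sym //.
by move=> z vz /(meridian_darts_at Px Px' vx' vz) [] ->; [left|right].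
Qed.

Lemma sides_linked_meridian d0 d : d \in P -> sides_linked (nth d0 P 0) d.
Proof. exact: (dpath_ind dpP d0 sides_linked_refl sides_linked_trans sides_linked_step). Qed.

End MeridianPair.

Lemma dpath_WE : dpath (WE T) (vN T) (vS T). Proof. exact: t_WE tmpl. Qed.
Lemma dpath_EW : dpath (EW T) (vN T) (vS T). Proof. exact: t_EW tmpl. Qed.

Lemma sides_linked_WE d0 d : d \in WE T -> sides_linked (nth d0 (WE T) 0) d.
Proof. exact: (sides_linked_meridian dpath_WE dpath_EW (t_disj_v tmpl) (fun _ => erefl)). Qed.

Lemma sides_linked_EW d0 d : d \in EW T -> sides_linked (nth d0 (EW T) 0) d.
Proof.
apply: (sides_linked_meridian dpath_EW dpath_WE) => [d1 d2 EWd1 WEd2 E|d'].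
  by rewrite E (t_disj_v tmpl WEd2 EWd1 (esym E)).
by rewrite /merD orbC.
Qed.

Lemma inWf_connect f g : inWf f -> connect fadj f g -> inWf g.
Proof.
case/existsP=> d /andP [WEd c] c'; apply/existsP; exists d.
by rewrite WEd (connect_trans c c').
Qed.

Lemma inEf_connect f g : inEf f -> connect fadj f g -> inEf g.
Proof.
case/existsP=> d /andP [WEd c] c'; apply/existsP; exists d.
by rewrite WEd (connect_trans c c').
Qed.

Lemma inWf_right d : d \in WE T -> inWf (fac d).
Proof. by move=> WEd; apply/existsP; exists d; rewrite WEd connect0. Qed.

Lemma inEf_left d : d \in WE T -> inEf (fac (alpha d)).
Proof. by move=> WEd; apply/existsP; exists d; rewrite WEd connect0. Qed.

Section MeridianEnds.
Variables d1 dk e1 em : D.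
Hypotheses (Hd1 : ohead (WE T) = Some d1) (Hdk : ohead (rev (WE T)) = Some dk).
Hypotheses (He1 : ohead (EW T) = Some e1) (Hem : ohead (rev (EW T)) = Some em).

Lemma d1_WE : d1 \in WE T. Proof. exact: ohead_mem. Qed.
Lemma e1_EW : e1 \in EW T. Proof. exact: ohead_mem. Qed.
Lemma dk_WE : dk \in WE T. Proof. by rewrite -mem_rev; apply: ohead_mem. Qed.
Lemma em_EW : em \in EW T. Proof. by rewrite -mem_rev; apply: ohead_mem. Qed.

Lemma fwd_d1 : fwd d1. Proof. exact: (dpath_fwd dpath_WE d1_WE). Qed.
Lemma fwd_e1 : fwd e1. Proof. exact: (dpath_fwd dpath_EW e1_EW). Qed.
Lemma fwd_dk : fwd dk. Proof. exact: (dpath_fwd dpath_WE dk_WE). Qed.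
Lemma fwd_em : fwd em. Proof. exact: (dpath_fwd dpath_EW em_EW). Qed.

Lemma vert_d1 : vert d1 = vN T. Proof. exact: (dpath_ohead_vert dpath_WE Hd1). Qed.
Lemma vert_e1 : vert e1 = vN T. Proof. exact: (dpath_ohead_vert dpath_EW He1). Qed.
Lemma vert_alpha_dk : vert (alpha dk) = vS T. Proof. exact: (dpath_olast_vert dpath_WE Hdk). Qed.
Lemma vert_alpha_em : vert (alpha em) = vS T. Proof. exact: (dpath_olast_vert dpath_EW Hem). Qed.

Lemma edg_d1_neq_e1 : edg d1 <> edg e1. Proof. exact: (t_disj_e tmpl d1_WE e1_EW). Qed.
Lemma edg_dk_neq_em : edg dk <> edg em. Proof. exact: (t_disj_e tmpl dk_WE em_EW). Qed.

Lemma meridian_darts_at_N z : vert z = vN T -> merE (edg z) -> z = d1 \/ z = e1.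
Proof.
move=> vz /merE_dart [/orP [] in_z|/orP [] in_z].
- by left; move: (dpath_first dpath_WE in_z vz); rewrite Hd1 => -[].
- by right; move: (dpath_first dpath_EW in_z vz); rewrite He1 => -[].
- by case: (no_arc_into_source (dpath_fwd dpath_WE in_z)); rewrite alpha_involutive.
- by case: (no_arc_into_source (dpath_fwd dpath_EW in_z)); rewrite alpha_involutive.
Qed.

Lemma meridian_darts_at_S z : vert z = vS T -> merE (edg z) -> z = alpha dk \/ z = alpha em.
Proof.
move=> vz /merE_dart [/orP [] in_z|/orP [] in_z].
- by case: (no_arc_out_of_sink (dpath_fwd dpath_WE in_z)).
- by case: (no_arc_out_of_sink (dpath_fwd dpath_EW in_z)).
- left; move: (dpath_last dpath_WE in_z); rewrite alpha_involutive Hdk => /(_ vz) [->].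
  by rewrite alpha_involutive.
- right; move: (dpath_last dpath_EW in_z); rewrite alpha_involutive Hem => /(_ vz) [->].
  by rewrite alpha_involutive.
Qed.

Lemma d1_neq_e1 : d1 != e1.
Proof. by apply/eqP => E; apply: edg_d1_neq_e1; rewrite E. Qed.

Lemma alpha_dk_neq_em : alpha dk != alpha em.
Proof. by apply/eqP => /(can_inj alpha_involutive) E; apply: edg_dk_neq_em; rewrite E. Qed.

Lemma north_W_faces_linked : connect fadj (fac d1) (fac (alpha e1)).
Proof.
apply: connect_fadj_around; rewrite 1?eq_sym ?d1_neq_e1 ?vert_d1 ?vert_e1 //.
by move=> z vz /(meridian_darts_at_N vz) [] ->; [right|left].
Qed.

Lemma north_E_faces_linked : connect fadj (fac e1) (fac (alpha d1)).
Proof.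
apply: connect_fadj_around; rewrite ?d1_neq_e1 ?vert_d1 ?vert_e1 //.
by move=> z vz /(meridian_darts_at_N vz) [] ->; [left|right].
Qed.

Lemma south_E_faces_linked : connect fadj (fac (alpha dk)) (fac em).
Proof.
have := @connect_fadj_around (alpha em) (alpha dk); rewrite alpha_involutive.
apply; rewrite 1?eq_sym ?alpha_dk_neq_em ?vert_alpha_dk ?vert_alpha_em //.
by move=> z vz /(meridian_darts_at_S vz) [] ->; [right|left].
Qed.

Lemma south_W_faces_linked : connect fadj (fac (alpha em)) (fac dk).
Proof.
have := @connect_fadj_around (alpha dk) (alpha em); rewrite alpha_involutive.
apply; rewrite ?alpha_dk_neq_em ?vert_alpha_dk ?vert_alpha_em //.
by move=> z vz /(meridian_darts_at_S vz) [] ->; [left|right].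
Qed.

Lemma sides_linked_e1 d : d \in EW T -> sides_linked e1 d.
Proof. by move/(sides_linked_EW e1); move: He1; case: (EW T) => //= x q [->]. Qed.

Lemma inWf_alpha_e1 : inWf (fac (alpha e1)).
Proof. exact: (inWf_connect (inWf_right d1_WE) north_W_faces_linked). Qed.

Lemma inEf_e1 : inEf (fac e1).
Proof. exact: (inEf_connect (inEf_left d1_WE) (connect_fadjC north_E_faces_linked)). Qed.

Lemma inEf_em : inEf (fac em).
Proof. exact: (inEf_connect (inEf_left dk_WE) south_E_faces_linked). Qed.

Lemma inWf_alpha_em : inWf (fac (alpha em)).
Proof. exact: (inWf_connect (inWf_right dk_WE) (connect_fadjC south_W_faces_linked)). Qed.

Lemma inWf_or_inEf_alpha d : inWf (fac d) || inEf (fac d) ->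
  inWf (fac (alpha d)) || inEf (fac (alpha d)).
Proof.
case: (boolP (merE (edg d))) => [/merE_dart [/orP [] in_d|/orP [] in_d] _|nm].
- by rewrite (inEf_left in_d) orbT.
- by rewrite (inWf_connect inWf_alpha_e1 (sides_linked_e1 in_d).2).
- by rewrite (inWf_right in_d).
- by rewrite (inEf_connect inEf_e1 (sides_linked_e1 in_d).1) orbT.
have c : connect fadj (fac d) (fac (alpha d)).
  by apply: connect1; apply/existsP; exists d; rewrite !eqxx nm.
by case/orP=> [/inWf_connect|/inEf_connect] /(_ _ c) ->; rewrite ?orbT.
Qed.

Lemma inWf_or_inEf f : inWf f || inEf f.
Proof.
case: (fac_surj sph f) => x <-.
case/connectP: (map_connected sph d1 x) => s walk ->.
have : inWf (fac d1) || inEf (fac d1) by rewrite inWf_right ?d1_WE.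
elim: s d1 walk => [|y s IHs] z //= /andP [/orP [] /eqP -> walk_s] z_in.
  exact: IHs walk_s (inWf_or_inEf_alpha z_in).
by apply: IHs walk_s _; rewrite fac_sigma inWf_or_inEf_alpha.
Qed.

Lemma closW_or_closE c : c != CO T -> closW c || closE c.
Proof.
case: c => [[v|e]|[f|[]]] //= _; last exact: inWf_or_inEf.
- have [//|nm] := boolP (merV v); rewrite /inWv /inEv nm /=.
  case: (vert_surj sph v) => d <-.
  by case/orP: (inWf_or_inEf (fac d)) => in_d; apply/orP; [left|right];
    apply/existsP; exists d; rewrite eqxx.
- have [//|nm] := boolP (merE e); rewrite /inWe /inEe nm /=.
  case: (edg_surj sph e) => d <-.
  by case/orP: (inWf_or_inEf (fac d)) => in_d; apply/orP; [left|right];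
    apply/existsP; exists d; rewrite eqxx.
Qed.

End MeridianEnds.
End TemplateMap.

Section MeridianCycle.
Variable T : tdata.
Hypothesis tmpl : template T.
Local Notation D := (Dart T).
Local Notation alpha := (@alpha T).
Local Notation sigma := (@sigma T).
Local Notation vert := (@vert T).
Local Notation edg := (@edg T).
Local Notation fac := (@fac T).
Local Notation fadj := (@fadj T).
Local Open Scope ring_scope.
Local Notation F2 := 'F_2.

Let sph := t_sphere tmpl.

Lemma F2_addrr (x : F2) : x + x = 0.
Proof. exact: (addrr_pchar2 (pchar_Fp (isT : prime 2))). Qed.

Lemma F2_addr_eq0 (x y : F2) : x + y = 0 -> y = x.
Proof. by move=> xy0; rewrite -[y]add0r -(F2_addrr x) -addrA xy0 addr0. Qed.

Lemma F2_addKr (x y : F2) : x + (x + y) = y.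
Proof. by rewrite addrA F2_addrr add0r. Qed.

Lemma sum_enum_rank (X : finType) (G : 'I_#|X| -> F2) :
  \sum_(i < #|X|) G i = \sum_(x : X) G (enum_rank x).
Proof. by rewrite (reindex enum_rank) //; apply: onW_bij; apply: enum_rank_bij. Qed.

Lemma sum_mul_indicator (X : finType) (s : seq D) (P : pred D) (p : D -> X) (H : X -> F2) :
  \sum_(x : X) (\sum_(d <- s | P d) (p d == x)%:R) * H x = \sum_(d <- s | P d) H (p d).
Proof.
under eq_bigr => x _ do rewrite big_distrl /=.
rewrite exchange_big /=; apply: eq_bigr => d _.
rewrite (bigD1 (p d)) //= eqxx mul1r big1 ?addr0 // => x /negbTE.
by rewrite eq_sym => ->; rewrite mul0r.
Qed.

Lemma sum_edge (G : D -> F2) x : \sum_(d | edg d == edg x) G d = G x + G (alpha x).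
Proof.
rewrite (bigD1 x) //= (bigD1 (alpha x)) /=; last first.
  by rewrite edg_alpha // eqxx; apply/eqP; apply: (alpha_fix sph).
rewrite big1 ?addr0 // => d /andP [/andP [/eqP /(edg_eq_or_alpha tmpl) [] -> nx] nax].
- by rewrite eqxx in nx.
- by rewrite eqxx in nax.
Qed.

(* [incidence p] is the edge-by-[X] incidence matrix over F2 of the dart
   labelling [p]: [incidence vert] is the boundary map from edges to vertices,
   and the transpose of [incidence fac] the boundary map from faces to edges. *)
Definition incidence (X : finType) (p : D -> X) : 'M[F2]_(#|Eg T|, #|X|) :=
  \matrix_(i, j) \sum_(d | edg d == enum_val i) (p d == enum_val j)%:R.

Lemma incidence_mulT (X : finType) (p : D -> X) (u : 'rV[F2]_#|X|) x :
  (u *m (incidence p)^T) 0 (enum_rank (edg x)) =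
  u 0 (enum_rank (p x)) + u 0 (enum_rank (p (alpha x))).
Proof.
rewrite mxE sum_enum_rank.
under eq_bigr => y _ do rewrite !mxE !enum_rankK mulrC.
by rewrite sum_mul_indicator sum_edge.
Qed.

Lemma kermx_incidenceT_const (X : finType) (p : D -> X) :
  (forall x, exists d, p d = x) ->
  (forall d, p (sigma d) = p d \/ p (sigma d) = p (alpha d)) ->
  (kermx (incidence p)^T <= (const_mx 1 : 'rV[F2]_#|X|))%MS.
Proof.
move=> p_surj p_sigma; apply/row_subP => i; set u := row i _.
have u0 : u *m (incidence p)^T = 0 by rewrite /u -row_mul mulmx_ker row0.
clearbody u.
pose g d := u 0 (enum_rank (p d)).
have g_alpha d : g (alpha d) = g d.
  by apply: F2_addr_eq0; rewrite -incidence_mulT u0 mxE.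
have g_sigma d : g (sigma d) = g d.
  by rewrite /g; case: (p_sigma d) => ->; rewrite -/(g _) ?g_alpha.
case: (vert_surj sph (vN T)) => d0 _.
have g_const d : g d = g d0.
  case/connectP: (map_connected sph d0 d) => s walk ->.
  elim: s d0 walk => //= y s IHs z /andP [/orP [] /eqP -> walk_s];
    by rewrite IHs // ?g_alpha ?g_sigma.
have -> : u = g d0 *: const_mx 1.
  apply/matrixP => a j; rewrite !mxE (ord1 a) mulr1 -[j]enum_valK.
  by case: (p_surj (enum_val j)) => d <-; rewrite -(g_const d).
exact: scalemx_sub (submx_refl _).
Qed.

Lemma rank_ker_incidenceT (X : finType) (p : D -> X) :
  (forall x, exists d, p d = x) ->
  (forall d, p (sigma d) = p d \/ p (sigma d) = p (alpha d)) ->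
  (\rank (kermx (incidence p)^T) <= 1)%N.
Proof.
by move=> p_surj p_sigma; apply: leq_trans (mxrankS (kermx_incidenceT_const p_surj p_sigma)) (rank_leq_row _).
Qed.

Lemma sum_indicator_swap (X : finType) (p : D -> X) e x :
  \sum_(d | edg d == e) ((p d == x)%:R : F2) = \sum_(d | p d == x) (edg d == e)%:R.
Proof. by rewrite big_mkcond [RHS]big_mkcond; apply: eq_bigr => d _; case: eqP; case: eqP. Qed.

Lemma boundary_boundary : (incidence fac)^T *m incidence vert = 0.
Proof.
apply/matrixP => i j; rewrite !mxE sum_enum_rank.
under eq_bigr => e _ do rewrite !mxE !enum_rankK sum_indicator_swap.
rewrite sum_mul_indicator.
under eq_bigr => d _ do rewrite sum_edge.
rewrite big_split /=; set f := enum_val i; set v := enum_val j.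
have phi_inj : injective (@phi T).
  by move=> x y /(sigma_inj sph) /(can_inj (alpha_involutive tmpl)).
suff -> : \sum_(d | fac d == f) ((vert (alpha d) == v)%:R : F2) =
          \sum_(d | fac d == f) (vert d == v)%:R by apply: F2_addrr.
rewrite [RHS](reindex_inj phi_inj) /=; apply: eq_big => d.
  by rewrite /phi fac_sigma // alpha_involutive.
by move=> _; rewrite /phi vert_sigma.
Qed.

(* Exactness at the edges, [H_1(S^2; F_2) = 0], from the two connectivity
   bounds and Euler's formula [V - E + F = 2]. *)
Lemma cycle_is_boundary : (kermx (incidence vert) <= (incidence fac)^T)%MS.
Proof.
have im_sub : ((incidence fac)^T <= kermx (incidence vert))%MS.
  by apply/sub_kermxP; apply: boundary_boundary.
have rV := rank_ker_incidenceT (vert_surj sph) (fun d => or_introl (vert_sigma tmpl d)).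
have rF := rank_ker_incidenceT (fac_surj sph) (fun d => or_intror (fac_sigma tmpl d)).
rewrite mxrank_ker mxrank_tr in rV; rewrite mxrank_ker mxrank_tr in rF.
have euler := euler_sphere sph.
have le1 := rank_leq_col (incidence vert); have le2 := rank_leq_col (incidence fac).
rewrite -(mxrank_leqif_sup im_sub).2 eqn_leq (mxrankS im_sub) /= mxrank_ker mxrank_tr.
move: rV rF le1 le2 euler; set a := \rank (incidence vert); set b := \rank (incidence fac).
by move: #|Vx T| #|Fc T| #|Eg T| => nv nf ne; lia.
Qed.

Definition meridian_cycle : 'rV[F2]_#|Eg T| :=
  \row_i \sum_(d <- WE T ++ EW T) (edg d == enum_val i)%:R.

Lemma sum_telescope x q v : path (fun a b => vert (alpha a) == vert b) x q ->
  \sum_(d <- x :: q) (((vert d == v)%:R : F2) + (vert (alpha d) == v)%:R) =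
  (vert x == v)%:R + (vert (alpha (last x q)) == v)%:R.
Proof.
elim: q x => [|y q IHq] x /=; first by rewrite big_cons big_nil addr0.
by case/andP=> /eqP E walk; rewrite big_cons IHq // -E -addrA F2_addKr.
Qed.

Lemma sum_dpath_ends p v : dpath p (vN T) (vS T) ->
  \sum_(d <- p) (((vert d == v)%:R : F2) + (vert (alpha d) == v)%:R) =
  (vN T == v)%:R + (vS T == v)%:R.
Proof. by case/dpathP=> x [q [-> vx _ walk vl]]; rewrite sum_telescope // vx vl. Qed.

Lemma meridian_cycle_closed : meridian_cycle *m incidence vert = 0.
Proof.
apply/matrixP => i j; rewrite !mxE sum_enum_rank.
under eq_bigr => e _ do rewrite !mxE !enum_rankK.
rewrite sum_mul_indicator.
under eq_bigr => d _ do rewrite sum_edge.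
rewrite big_cat /= (sum_dpath_ends _ (dpath_WE tmpl)) (sum_dpath_ends _ (dpath_EW tmpl)).
exact: F2_addrr.
Qed.

Lemma meridian_cycle_edg x : x \in WE T ++ EW T ->
  meridian_cycle 0 (enum_rank (edg x)) = 1.
Proof.
move=> mer_x; have fwd_mer d : d \in WE T ++ EW T -> fwd d.
  rewrite mem_cat => /orP [] mer_d.
  - exact: (dpath_fwd (dpath_WE tmpl) mer_d).
  - exact: (dpath_fwd (dpath_EW tmpl) mer_d).
have uniq_mer : uniq (WE T ++ EW T).
  rewrite cat_uniq (dpath_uniq tmpl (dpath_WE tmpl)) (dpath_uniq tmpl (dpath_EW tmpl)) andbT /=.
  by apply/hasPn => d EWd; apply/negP => WEd; apply: (t_disj_e tmpl WEd EWd).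
rewrite mxE enum_rankK (eq_big_seq (fun d => (d == x)%:R)); last first.
  move=> d mer_d; have [-> |ndx] := eqVneq d x; first by rewrite !eqxx.
  case: eqP => // /(fwd_edg_inj tmpl (fwd_mer _ mer_x) (fwd_mer _ mer_d)) dx.
  by rewrite dx eqxx in ndx.
by rewrite (bigD1_seq x) //= eqxx big1 ?addr0 // => d /negbTE ->.
Qed.

Lemma meridian_separation : exists a : Fc T -> F2,
  (forall f g, fadj f g -> a f = a g) /\
  (forall d, d \in WE T ++ EW T -> a (fac d) != a (fac (alpha d))).
Proof.
have : (meridian_cycle <= (incidence fac)^T)%MS.
  by apply: submx_trans cycle_is_boundary; apply/sub_kermxP; apply: meridian_cycle_closed.
case/submxP=> u cycle_u; exists (fun f => u 0 (enum_rank f)).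
have sides d : meridian_cycle 0 (enum_rank (edg d)) =
    u 0 (enum_rank (fac d)) + u 0 (enum_rank (fac (alpha d))).
  by rewrite cycle_u incidence_mulT.
split=> [f g /existsP [d /and3P [/eqP <- /eqP <- not_mer]]|d mer_d].
  apply/esym/F2_addr_eq0; rewrite -sides mxE enum_rankK big_seq big1 // => m mer_m.
  by case: eqP => // E; case/negP: not_mer; rewrite -E merD_merE // /merD -mem_cat.
apply/eqP => E; move: (meridian_cycle_edg mer_d); rewrite sides E F2_addrr.
by move/esym/eqP; rewrite oner_eq0.
Qed.

End MeridianCycle.

Lemma inWf_inEf_disjoint (T : tdata) (f : Fc T) : template T -> inWf f -> ~~ inEf f.
Proof.
move=> tmpl; case: (meridian_separation tmpl) => a [a_adj a_sep].
have a_connect g g' : connect (@fadj T) g g' -> a g = a g'.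
  by case/connectP=> s walk ->; elim: s g walk => //= g'' s IHs g /andP [/a_adj -> /IHs].
case/existsP=> d /andP [WEd /a_connect af]; apply/negP.
case/existsP=> d' /andP [WEd' /a_connect af']; set d0 := nth d (WE T) 0.
have mer_d0 : d0 \in WE T ++ EW T by rewrite mem_cat mem_nth //; case: (WE T) WEd.
have [link_d _] := sides_linked_WE tmpl d WEd.
have [_ link_d'] := sides_linked_WE tmpl d WEd'.
move: (a_sep _ mer_d0).
by rewrite (a_connect _ _ link_d) (a_connect _ _ link_d') af af' eqxx.
Qed.

Section HamiltonianPaths.
Variable T : tdata.
Hypothesis tmpl : template T.
Local Notation D := (Dart T).
Local Notation alpha := (@alpha T).
Local Notation vert := (@vert T).
Local Notation edg := (@edg T).
Local Notation fac := (@fac T).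
Local Notation fwd := (@fwd T).
Local Notation CO := (CO T).

(* The faces a Hamiltonian path of type [z] may visit just before, resp. just
   after, the edge of the forward dart [d]. *)
Definition face_before (z : bool) (d : D) : Fc T := fac (if z then alpha d else d).
Definition face_after (z : bool) (d : D) : Fc T := face_before (~~ z) d.

Lemma step_to_edge z c d : fwd d -> step z c (CE (edg d)) ->
  c = CV (vert d) \/ c = CF (face_before z d).
Proof.
move=> fd; case: c => [[v|e]|[f|[]]] //=.
  by case=> d' [fd' <- /(fwd_edg_inj tmpl fd fd') ->]; left.
by case: z => -[d' [fd' /(fwd_edg_inj tmpl fd fd') -> <- _]]; right.
Qed.

Lemma step_from_edge z c d : fwd d -> step z (CE (edg d)) c ->
  c = CV (vert (alpha d)) \/ c = CF (face_after z d).
Proof.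
move=> fd; case: c => [[v|e]|[f|[]]] //=.
  by case=> d' [fd' /(fwd_edg_inj tmpl fd fd') -> <-]; left.
by rewrite /face_after /face_before; case: z => -[d' [fd' /(fwd_edg_inj tmpl fd fd') -> <- _]]; right.
Qed.

Section HamiltonianPath.
Variables (X : pred (cell T)) (z : bool) (t : seq (cell T)).
Hypothesis hp : ham_path X z t.

Lemma ham_path_head : nth CO t 0 = CV (vN T).
Proof. by case: hp => _ _; case: t => //= x t' [->]. Qed.

Lemma ham_path_size : 0 < size t.
Proof. by case: hp => _ _; case: t. Qed.

Lemma ham_path_last : nth CO t (size t - 1) = CV (vS T).
Proof.
case: hp => _ _ _; case/lastP: t => // t' x; rewrite rev_rcons => -[->] _.
by rewrite size_rcons nth_rcons subn1 /= ltnn eqxx.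
Qed.

Lemma ham_path_mem c : c \in t = X c.
Proof. by case: hp. Qed.

Lemma ham_path_pred c : c \in t -> 0 < index c t ->
  step z (nth CO t (index c t).-1) c.
Proof.
case: hp => _ _ _ _ steps c_in; have := c_in; rewrite -index_mem.
by case: (index c t) (nth_index CO c_in) => // j c_j lt_j _; rewrite -[X in step _ _ X]c_j; apply: steps.
Qed.

Lemma ham_path_succ c : c \in t -> (index c t).+1 < size t ->
  step z c (nth CO t (index c t).+1).
Proof. by case: hp => _ _ _ _ steps c_in /steps; rewrite nth_index. Qed.

Lemma ham_path_source_edge d : X (CE (edg d)) -> fwd d -> vert d = vN T ->
  nth CO t 1 = CE (edg d) \/
  X (CF (face_before z d)) /\ before t (CF (face_before z d)) (CE (edg d)).
Proof.
move=> X_e fd vd; have [uniq_t _ _ _ _] := hp.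
have e_in : CE (edg d) \in t by rewrite ham_path_mem.
have lt_e := e_in; rewrite -index_mem in lt_e.
have pos_e : 0 < index (CE (edg d)) t.
  rewrite lt0n; apply: contraTneq isT => e0.
  by move: (nth_index CO e_in); rewrite e0 ham_path_head.
have lt_pred : (index (CE (edg d)) t).-1 < size t := leq_ltn_trans (leq_pred _) lt_e.
case: (step_to_edge fd (ham_path_pred e_in pos_e)) => // [prev_N|prev_f]; [left|right].
  move: prev_N; rewrite vd -ham_path_head => /eqP; rewrite nth_uniq ?ham_path_size //.
  by move/eqP=> e1; rewrite -(nth_index CO e_in) -(prednK pos_e) e1.
rewrite -ham_path_mem -prev_f mem_nth //; split=> //.
by rewrite /before index_uniq // ltn_predL.
Qed.

Lemma ham_path_sink_edge d : X (CE (edg d)) -> fwd d -> vert (alpha d) = vS T ->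
  nth CO t (size t - 2) = CE (edg d) \/
  X (CF (face_after z d)) /\ before t (CE (edg d)) (CF (face_after z d)).
Proof.
move=> X_e fd vd; have [uniq_t _ _ _ _] := hp.
have e_in : CE (edg d) \in t by rewrite ham_path_mem.
have lt_e := e_in; rewrite -index_mem in lt_e.
have last_t := ham_path_last; have pos_t := ham_path_size.
have lt_e1 : (index (CE (edg d)) t).+1 < size t.
  rewrite ltn_neqAle lt_e andbT; apply: contraTneq isT => e_last.
  by move: last_t; rewrite -e_last subn1 /= nth_index.
case: (step_from_edge fd (ham_path_succ e_in lt_e1)) => // [next_S|next_f]; [left|right].
  move: next_S; rewrite vd -last_t => /eqP; rewrite nth_uniq // ?subn1 ?prednK //.
  by move/eqP=> e_eq; rewrite -(nth_index CO e_in); congr nth; lia.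
by rewrite -ham_path_mem -next_f mem_nth // /before index_uniq.
Qed.

Lemma ham_path_second d : X (CE (edg d)) -> fwd d -> vert d = vN T ->
  ~~ X (CF (face_before z d)) -> nth CO t 1 = CE (edg d).
Proof.
by move=> X_e fd vd; case: (ham_path_source_edge X_e fd vd) => // -[->].
Qed.

Lemma ham_path_penult d : X (CE (edg d)) -> fwd d -> vert (alpha d) = vS T ->
  ~~ X (CF (face_after z d)) -> nth CO t (size t - 2) = CE (edg d).
Proof.
by move=> X_e fd vd; case: (ham_path_sink_edge X_e fd vd) => // -[->].
Qed.

End HamiltonianPath.
End HamiltonianPaths.

Lemma inEf_inWf_disjoint (T : tdata) (f : Fc T) : template T -> inEf f -> ~~ inWf f.
Proof. by move=> tmpl; apply: contraL; apply: inWf_inEf_disjoint. Qed.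

Lemma dpath_ends (T : tdata) (p : seq (Dart T)) u v : dpath p u v ->
  exists d d', ohead p = Some d /\ ohead (rev p) = Some d'.
Proof. by case: p => [[]|d q _]; exists d, (last d q); split; rewrite // lastI rev_rcons. Qed.

Section PolarArcs.
Variable T : tdata.
Hypothesis tmpl : template T.
Local Notation edg := (@edg T).
Local Notation fac := (@fac T).
Local Notation alpha := (@alpha T).
Local Notation CO := (CO T).
Local Notation closW := (@closW T).
Local Notation closE := (@closE T).
Variables d1 dk e1 em : Dart T.
Hypotheses (Hd1 : ohead (WE T) = Some d1) (Hdk : ohead (rev (WE T)) = Some dk).
Hypotheses (He1 : ohead (EW T) = Some e1) (Hem : ohead (rev (EW T)) = Some em).

Lemma closWE_poles :
  [/\ closW (CV (vN T)), closE (CV (vN T)), closW (CV (vS T)) & closE (CV (vS T))].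
Proof.
have merV_N : merV (vN T).
  by apply/existsP; exists d1; rewrite /merD (d1_WE Hd1) (vert_d1 tmpl Hd1) eqxx.
have merV_S : merV (vS T).
  by apply/existsP; exists dk; rewrite /merD (dk_WE Hdk) (vert_alpha_dk tmpl Hdk) eqxx orbT.
by rewrite /= merV_N merV_S.
Qed.

Lemma closWE_WE d : d \in WE T -> closW (CE (edg d)) && closE (CE (edg d)).
Proof. by move=> WEd; rewrite /= merD_merE // /merD WEd. Qed.

Lemma closWE_EW d : d \in EW T -> closW (CE (edg d)) && closE (CE (edg d)).
Proof. by move=> EWd; rewrite /= merD_merE // /merD EWd orbT. Qed.

Section Hemispheres.
Variables (h : seq (cell T)) (zW zE : bool) (f g : Fc T).
Hypotheses (uniq_h : uniq h) (h_all : forall c, c \in h).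
Hypotheses (hamW : ham_path closW zW (filter closW h)).
Hypotheses (hamE : ham_path closE zE (filter closE h)).
Hypothesis window : infix [:: CF f; CO; CF g] h.

Lemma hemispheres_ends : [/\ nth CO h 0 = CV (vN T), nth CO h (size h - 1) = CV (vS T),
  1 < index CO h & (index CO h).+2 < size h].
Proof.
have [i_CO i_g] := index_infix3 uniq_h window.
have lt_g : index (CF g) h < size h by rewrite index_mem.
have pos_h : 0 < size h by apply: leq_ltn_trans lt_g.
have [NW NE SW SE] := closWE_poles.
have cover := closW_or_closE tmpl Hd1 He1.
have h0 : nth CO h 0 = CV (vN T).
  have : nth CO h 0 != CO by apply: contraTneq isT => h0; move: i_CO; rewrite -h0 index_uniq.
  case/cover/orP=> X_h0.
    by rewrite -(nth_filter_head pos_h X_h0) (ham_path_head hamW).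
  by rewrite -(nth_filter_head pos_h X_h0) (ham_path_head hamE).
have lt_last : size h - 1 < size h by rewrite subn1 prednK.
have hl : nth CO h (size h - 1) = CV (vS T).
  have : nth CO h (size h - 1) != CO.
    apply: contraTneq isT => hl; move: lt_g; rewrite i_g -hl index_uniq //.
    by rewrite subn1 prednK // ltnn.
  case/cover/orP=> X_hl.
    by rewrite -(nth_filter_last pos_h X_hl) (ham_path_last hamW).
  by rewrite -(nth_filter_last pos_h X_hl) (ham_path_last hamE).
split=> //.
  rewrite i_CO ltnS lt0n; apply: contraTneq isT => f0.
  by move: (nth_index CO (h_all (CF f))); rewrite f0 h0.
rewrite -i_g ltn_neqAle lt_g andbT; apply: contraTneq isT => g_last.
have g_eq : index (CF g) h = size h - 1 by rewrite -g_last subn1.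
by move: (nth_index CO (h_all (CF g))); rewrite g_eq hl.
Qed.

Lemma hemispheres_second c : nth CO (filter closW h) 1 = c ->
  nth CO (filter closE h) 1 = c -> nth CO h 1 = c.
Proof.
move=> cW cE; have [h0 _ lt_CO lt_size] := hemispheres_ends.
have [NW NE _ _] := closWE_poles; have lt1 : 1 < size h by lia.
have : nth CO h 1 != CO by apply: contraTneq isT => h1; move: lt_CO; rewrite -h1 index_uniq.
case/(closW_or_closE tmpl Hd1 He1)/orP=> X_h1.
  by rewrite -cW nth_filter_second // h0.
by rewrite -cE nth_filter_second // h0.
Qed.

Lemma hemispheres_penult c : nth CO (filter closW h) (size (filter closW h) - 2) = c ->
  nth CO (filter closE h) (size (filter closE h) - 2) = c -> nth CO h (size h - 2) = c.
Proof.
move=> cW cE; have [_ hl lt_CO lt_size] := hemispheres_ends.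
have [_ _ SW SE] := closWE_poles; have lt1 : 1 < size h by lia.
have : nth CO h (size h - 2) != CO.
  apply: contraTneq isT => hp; move: lt_size.
  have lt2 : size h - 2 < size h by lia.
  by rewrite -hp index_uniq // -[(size h - 2).+2]addn2 subnK // ltnn.
case/(closW_or_closE tmpl Hd1 He1)/orP=> X_h.
  by rewrite -cW nth_filter_penult // hl.
by rewrite -cE nth_filter_penult // hl.
Qed.

Lemma before_filter (X : pred (cell T)) a b :
  X a -> X b -> before (filter X h) a b -> before h a b.
Proof. by move=> Xa Xb; apply: index_filter_lt; rewrite ?mem_filter ?Xa ?Xb ?h_all. Qed.

End Hemispheres.

Lemma between_window (h : seq (cell T)) f g x y : uniq h ->
  infix [:: CF f; CO; CF g] h -> nth CO h 0 = CV (vN T) ->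
  nth CO h (size h - 1) = CV (vS T) -> 1 < index CO h -> (index CO h).+2 < size h ->
  before h (CF f) x -> x != CO -> before h y (CF g) -> y != CO ->
  [/\ before h (CV (vN T)) CO, before h CO x, before h y CO & before h CO (CV (vS T))].
Proof.
move=> uniq_h window h0 hl lt_CO lt_size fx xCO yg yCO.
have [CO_x y_CO] := index_window uniq_h window fx xCO yg yCO.
have pos_h : 0 < size h by apply: leq_ltn_trans lt_size.
rewrite /before -h0 -hl !index_uniq ?subn1 ?prednK //.
split=> //; first exact: ltnW lt_CO.
by rewrite -ltnS prednK // ltnW.
Qed.

Section SZSPair.
Variables h0 h1 : seq (cell T).
Hypotheses (uniq0 : uniq h0) (uniq1 : uniq h1).
Hypotheses (all0 : forall c, c \in h0) (all1 : forall c, c \in h1).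
Hypotheses (hamW0 : ham_path closW false (filter closW h0)).
Hypotheses (hamE0 : ham_path closE true (filter closE h0)).
Hypotheses (hamW1 : ham_path closW true (filter closW h1)).
Hypotheses (hamE1 : ham_path closE false (filter closE h1)).
Hypothesis win0 : infix [:: CF (fac d1); CO; CF (fac em)] h0.
Hypothesis win1 : infix [:: CF (fac (alpha e1)); CO; CF (fac (alpha dk))] h1.

Let fd1 := fwd_d1 tmpl Hd1.
Let fdk := fwd_dk tmpl Hdk.
Let fe1 := fwd_e1 tmpl He1.
Let fem := fwd_em tmpl Hem.
Let vd1 := vert_d1 tmpl Hd1.
Let vdk := vert_alpha_dk tmpl Hdk.
Let ve1 := vert_e1 tmpl He1.
Let vem := vert_alpha_em tmpl Hem.
Let mer_d1 := closWE_WE (d1_WE Hd1).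
Let mer_dk := closWE_WE (dk_WE Hdk).
Let mer_e1 := closWE_EW (e1_EW He1).
Let mer_em := closWE_EW (em_EW Hem).
Let notW f := inEf_inWf_disjoint (f := f) tmpl.
Let notE f := inWf_inEf_disjoint (f := f) tmpl.

Lemma h0_hemisphere_cells :
  [/\ nth CO (filter closW h0) 1 = CE (edg e1), nth CO (filter closE h0) 1 = CE (edg e1),
      nth CO (filter closW h0) (size (filter closW h0) - 2) = CE (edg dk)
    & nth CO (filter closE h0) (size (filter closE h0) - 2) = CE (edg dk)].
Proof.
have [[W_e1 E_e1] [W_dk E_dk]] := (andP mer_e1, andP mer_dk); split.
- apply: (ham_path_second tmpl hamW0) => //; apply: notW; exact: (inEf_e1 tmpl Hd1 He1).
- apply: (ham_path_second tmpl hamE0) => //; apply: notE; exact: (inWf_alpha_e1 tmpl Hd1 He1).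
- apply: (ham_path_penult tmpl hamW0) => //; apply: notW; exact: (inEf_left (dk_WE Hdk)).
- apply: (ham_path_penult tmpl hamE0) => //; apply: notE; exact: (inWf_right (dk_WE Hdk)).
Qed.

Lemma h1_hemisphere_cells :
  [/\ nth CO (filter closW h1) 1 = CE (edg d1), nth CO (filter closE h1) 1 = CE (edg d1),
      nth CO (filter closW h1) (size (filter closW h1) - 2) = CE (edg em)
    & nth CO (filter closE h1) (size (filter closE h1) - 2) = CE (edg em)].
Proof.
have [[W_d1 E_d1] [W_em E_em]] := (andP mer_d1, andP mer_em); split.
- apply: (ham_path_second tmpl hamW1) => //; apply: notW; exact: (inEf_left (d1_WE Hd1)).
- apply: (ham_path_second tmpl hamE1) => //; apply: notE; exact: (inWf_right (d1_WE Hd1)).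
- apply: (ham_path_penult tmpl hamW1) => //; apply: notW; exact: (inEf_em tmpl Hdk Hem).
- apply: (ham_path_penult tmpl hamE1) => //; apply: notE; exact: (inWf_alpha_em tmpl Hdk Hem).
Qed.

Lemma h0_polar_cells :
  nth CO h0 1 = CE (edg e1) /\ nth CO h0 (size h0 - 2) = CE (edg dk).
Proof.
have [W1 E1 W2 E2] := h0_hemisphere_cells.
by split; [apply: (hemispheres_second uniq0 all0 hamW0 hamE0 win0) |
           apply: (hemispheres_penult uniq0 all0 hamW0 hamE0 win0)].
Qed.

Lemma h1_polar_cells :
  nth CO h1 1 = CE (edg d1) /\ nth CO h1 (size h1 - 2) = CE (edg em).
Proof.
have [W1 E1 W2 E2] := h1_hemisphere_cells.
by split; [apply: (hemispheres_second uniq1 all1 hamW1 hamE1 win1) |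
           apply: (hemispheres_penult uniq1 all1 hamW1 hamE1 win1)].
Qed.

(* The other polar edge comes second in the hemisphere, so the source (sink)
   edge is reached through (left for) the adjacent face of the window. *)
Lemma h0_window_order :
  before h0 (CF (fac d1)) (CE (edg d1)) /\ before h0 (CE (edg em)) (CF (fac em)).
Proof.
have [W_d1 _] := andP mer_d1; have [_ E_em] := andP mer_em.
have [W_second _ _ E_penult] := h0_hemisphere_cells; split.
  case: (ham_path_source_edge tmpl hamW0 W_d1 fd1 vd1) => [|[X_f]].
    by rewrite W_second => -[/esym /(edg_d1_neq_e1 tmpl Hd1 He1)].
  exact: (before_filter uniq0 all0 X_f W_d1).
case: (ham_path_sink_edge tmpl hamE0 E_em fem vem) => [|[X_f]].
  by rewrite E_penult => -[/(edg_dk_neq_em tmpl Hdk Hem)].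
exact: (before_filter uniq0 all0 E_em X_f).
Qed.

Lemma h1_window_order : before h1 (CF (fac (alpha e1))) (CE (edg e1)) /\
  before h1 (CE (edg dk)) (CF (fac (alpha dk))).
Proof.
have [W_e1 _] := andP mer_e1; have [_ E_dk] := andP mer_dk.
have [W_second _ _ E_penult] := h1_hemisphere_cells; split.
  case: (ham_path_source_edge tmpl hamW1 W_e1 fe1 ve1) => [|[X_f]].
    by rewrite W_second => -[/(edg_d1_neq_e1 tmpl Hd1 He1)].
  exact: (before_filter uniq1 all1 X_f W_e1).
case: (ham_path_sink_edge tmpl hamE1 E_dk fdk vdk) => [|[X_f]].
  by rewrite E_penult => -[/esym /(edg_dk_neq_em tmpl Hdk Hem)].
exact: (before_filter uniq1 all1 E_dk X_f).
Qed.

Lemma h1_around_O : [/\ before h1 (CV (vN T)) CO, before h1 CO (nth CO h0 1),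
  before h1 (nth CO h0 (size h0 - 2)) CO & before h1 CO (CV (vS T))].
Proof.
have [-> ->] := h0_polar_cells; have [NW_e1 dk_SW] := h1_window_order.
have [h1_N h1_S lt_CO lt_size] := hemispheres_ends uniq1 all1 hamW1 hamE1 win1.
exact: (between_window uniq1 win1 h1_N h1_S lt_CO lt_size NW_e1 _ dk_SW).
Qed.

Lemma h0_around_O : [/\ before h0 (CV (vN T)) CO, before h0 CO (nth CO h1 1),
  before h0 (nth CO h1 (size h1 - 2)) CO & before h0 CO (CV (vS T))].
Proof.
have [-> ->] := h1_polar_cells; have [NE_d1 em_SE] := h0_window_order.
have [h0_N h0_S lt_CO lt_size] := hemispheres_ends uniq0 all0 hamW0 hamE0 win0.
exact: (between_window uniq0 win0 h0_N h0_S lt_CO lt_size NE_d1 _ em_SE).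
Qed.

End SZSPair.
End PolarArcs.

Theorem lemma5p5 (T : tdata) (h0 h1 : seq (cell T)) :
  template T -> SZS_pair h0 h1 ->
  forall iota : bool,
    let hi := if iota then h1 else h0 in
    let hj := if iota then h0 else h1 in
    [/\ before hj (CV (vN T)) (CO T),
        before hj (CO T) (nth (CO T) hi 1),
        before hj (nth (CO T) hi (size hi - 2)) (CO T)
      & before hj (CO T) (CV (vS T))].
Proof.
move=> tmpl [[uniq0 uniq1] [all0 all1] [hamW1 hamW0] [hamE0 hamE1] windows] iota.
have [d1 [dk [Hd1 Hdk]]] := dpath_ends (t_WE tmpl).
have [e1 [em [He1 Hem]]] := dpath_ends (t_EW tmpl).
have [win0 win1] := windows _ _ _ _ Hd1 Hdk He1 Hem.
case: iota => /=.
- exact: (h0_around_O tmpl Hd1 Hdk He1 Hem uniq0 uniq1 all0 all1 hamW0 hamE0 hamW1 hamE1 win0 win1).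
- exact: (h1_around_O tmpl Hd1 Hdk He1 Hem uniq0 uniq1 all0 all1 hamW0 hamE0 hamW1 hamE1 win0 win1).
Qed.
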